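(* Let $\rho>0$ and $\mu_{\mathsf f}\in\mathbb R^n$. Consider the minimum variance steering problem: for the system and affine disturbance feedback policy described in the context, find $\overline{\mathscr U}=\{\bar u(0),\dots,\bar u(T-1)\}$ and $\mathscr K=\{K_{(t,\tau)}:0\le\tau\le t\le T-2\}$ minimizing $J_1(\overline{\mathscr U},\mathscr K):=\mathrm{tr}(\mathrm{var}_x(T))$ subject to $\mathbb E\big[\sum_{t=0}^{T-1}u(t)^\top u(t)\big]-\rho^2\le0$ and $\mu_x(T)=\mu_{\mathsf f}$. This problem is equivalent to the convex program $$\min_{(\bar{\bm u},\bm{\mathcal K})\in\mathscr D}\ \mathcal J_1(\bm{\mathcal K})\quad\text{subject to}\quad (\bar{\bm u},\bm{\mathcal K})\in\mathscr D_1\cap\mathscr D_2,$$ where $\mathcal J_1(\bm{\mathcal K}):=\mathrm{tr}\big(\mathbf P_{T+1}\mathfrak h(\bm{\mathcal K})\mathbf P_{T+1}^\top\big)$ with $\mathfrak h(\bm{\mathcal K}):=\mathbf G_0\Sigma_0\mathbf G_0^\top+(\mathbf G_{\bm w}+\mathbf G_{\bm u}\bm{\mathcal K})\mathbf W(\mathbf G_{\bm w}+\mathbf G_{\bm u}\bm{\mathcal K})^\top$, $\mathscr D_1:=\{(\bar{\bm u},\bm{\mathcal K})\in\mathscr D:\ \bar{\bm u}^\top\bar{\bm u}+\mathrm{tr}(\bm{\mathcal K}\mathbf W\bm{\mathcal K}^\top)-\rho^2\le0\}$ and $\mathscr D_2:=\{(\bar{\bm u},\bm{\mathcal K})\in\mathscr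 D:\ \mathbf P_{T+1}(\mathbf G_{\bm u}\bar{\bm u}+\mathbf G_0\mu_0)-\mu_{\mathsf f}=0\}$, the decision variables being related by $\bar{\bm u}=\mathrm{vertcat}(\overline{\mathscr U})$ and $\bm{\mathcal K}$ built from $\mathscr K$ as in the context.
   Context: System: $x(t+1)=A(t)x(t)+B(t)u(t)+w(t)$, $t\in\{0,\dots,T-1\}$, $x(0)=x_0\sim\mathcal N(\mu_0,\Sigma_0)$ with $\Sigma_0$ symmetric positive definite; $w(0),\dots,w(T-1)$ i.i.d. Gaussian with mean $0$ and covariance $W$ (symmetric positive semidefinite), uncorrelated across time, and $\mathbb E[x_0w(t)^\top]=0$. Policy: $u(0)=\bar u(0)$, $u(t)=\bar u(t)+\sum_{\tau=0}^{t-1}K_{(t-1,\tau)}w(\tau)$ for $t\in\{1,\dots,T-1\}$, $K_{(t-1,\tau)}\in\mathbb R^{m\times n}$. Notation: $\Phi(t,\tau):=A(t-1)\cdots A(\tau)$ ($t>\tau$), $\Phi(t,t)=I$. $\bar{\bm u},\bm w$ are vertical concatenations of $\bar u(0..T-1)$, $w(0..T-1)$. $\mathbf W:=\mathrm{bdiag}(W,\dots,W)$ ($T$ blocks). $\mathbf G_0:=[I;\Phi(1,0);\dots;\Phi(T,0)]$; $\mathbf G_{\bm u}$ (block rows $0..T$, block columns $0..T-1$) has $(i,j)$ block $\Phi(i,j+1)B(j)$ if $i\ge j+1$, else $0$; $\mathbf G_{\bm w}$ has $(i,j)$ block $\Phi(i,j+1)$ if $i\ge j+1$, else $0$. $\bm{\mathcal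 K}:=\begin{bmatrix}0&0\\ \mathbf K&0\end{bmatrix}\in\mathbb R^{Tm\times Tn}$ with $\mathbf K$ block lower triangular having $(i,j)$ block $K_{(i,j)}$, $0\le j\le i\le T-2$; then $\bm u=\bar{\bm u}+\bm{\mathcal K}\bm w$. $\mathscr D$ is the set of all pairs $(\bar{\bm u},\bm{\mathcal K})\in\mathbb R^{Tm}\times\mathbb R^{Tm\times Tn}$ with $\bm{\mathcal K}$ of this structure. $\mathbf P_{T+1}\in\mathbb R^{n\times(T+1)n}$ is zero except for an identity in its last block, so $x(T)=\mathbf P_{T+1}[x(0);\dots;x(T)]$. $\mu_x(T)=\mathbb E[x(T)]$, $\mathrm{var}_x(T)$ its covariance matrix. *)

From HB Require Import structures.
From mathcomp Require Import all_boot all_order all_algebra.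
From mathcomp Require Import all_classical all_reals all_analysis.

Set Implicit Arguments.
Unset Strict Implicit.
Unset Printing Implicit Defensive.

Import Order.TTheory GRing.Theory Num.Theory.
Local Open Scope ring_scope.

Section Defs.
Variable R : realType.

Fixpoint Phi_aux n (A : nat -> 'M[R]_n) (tau k : nat) : 'M[R]_n :=
  match k with
  | 0 => 1%:M
  | k'.+1 => A (tau + k')%N *m Phi_aux A tau k'
  end.

Definition Phi n (A : nat -> 'M[R]_n) (t tau : nat) : 'M[R]_n :=
  Phi_aux A tau (t - tau).

Definition G0 n (T : nat) (A : nat -> 'M[R]_n) :
  'M[R]_(\sum_(i < T.+1) n, n) :=
  \mxcol_(i < T.+1) Phi A i 0.

Definition Gu n m (T : nat) (A : nat -> 'M[R]_n) (B : nat -> 'M[R]_(n, m)) :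
  'M[R]_(\sum_(i < T.+1) n, \sum_(j < T) m) :=
  \mxblock_(i < T.+1, j < T)
     (if (j.+1 <= i)%N then Phi A i j.+1 *m B j else 0 : 'M[R]_(n, m)).

Definition Gw n (T : nat) (A : nat -> 'M[R]_n) :
  'M[R]_(\sum_(i < T.+1) n, \sum_(j < T) n) :=
  \mxblock_(i < T.+1, j < T)
     (if (j.+1 <= i)%N then Phi A i j.+1 else 0 : 'M[R]_(n, n)).

Definition Wbold n (T : nat) (W : 'M[R]_n) : 'M[R]_(\sum_(i < T) n) :=
  \mxdiag_(i < T) W.

Definition PT n (T : nat) : 'M[R]_(n, \sum_(j < T.+1) n) :=
  \mxrow_(j < T.+1) (if j == ord_max then 1%:M else 0 : 'M[R]_(n, n)).

Definition vcat m (T : nat) (Ubar : nat -> 'cV[R]_m) : 'cV[R]_(\sum_(t < T) m) :=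
  \mxcol_(t < T) Ubar t.

(* calK = [0 0; K 0] with K block lower triangular, K's (i,j) block = K_(i,j),
   0 <= j <= i <= T-2; i.e. block (i,j) of calK is K_(i-1,j) when j < i. *)
Definition calK m n (T : nat) (Kf : nat -> nat -> 'M[R]_(m, n)) :
  'M[R]_(\sum_(i < T) m, \sum_(j < T) n) :=
  \mxblock_(i < T, j < T)
     (if (j < i)%N then Kf i.-1 j else 0 : 'M[R]_(m, n)).

Definition inD m n (T : nat) (ub : 'cV[R]_(\sum_(t < T) m))
  (K : 'M[R]_(\sum_(i < T) m, \sum_(j < T) n)) : Prop :=
  forall i j : 'I_T, (i <= j)%N ->
    @submxblock R T T (fun _ => m) (fun _ => n) K i j = 0.

Definition hK n m (T : nat) (A : nat -> 'M[R]_n) (B : nat -> 'M[R]_(n, m))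
  (Sig0 W : 'M[R]_n) (K : 'M[R]_(\sum_(i < T) m, \sum_(j < T) n)) :=
  G0 T A *m Sig0 *m (G0 T A)^T
  + (Gw T A + Gu T A B *m K) *m Wbold T W *m (Gw T A + Gu T A B *m K)^T.

Definition J1conv n m (T : nat) (A : nat -> 'M[R]_n) (B : nat -> 'M[R]_(n, m))
  (Sig0 W : 'M[R]_n) (K : 'M[R]_(\sum_(i < T) m, \sum_(j < T) n)) : R :=
  \tr (PT n T *m hK A B Sig0 W K *m (PT n T)^T).

Definition inD1 n m (T : nat) (W : 'M[R]_n) (rho : R)
  (ub : 'cV[R]_(\sum_(t < T) m)) (K : 'M[R]_(\sum_(i < T) m, \sum_(j < T) n)) :
  Prop :=
  inD ub K /\
  (ub^T *m ub) 0 0 + \tr (K *m Wbold T W *m K^T) - rho ^+ 2 <= 0.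

Definition inD2 n m (T : nat) (A : nat -> 'M[R]_n) (B : nat -> 'M[R]_(n, m))
  (mu0 muf : 'cV[R]_n)
  (ub : 'cV[R]_(\sum_(t < T) m)) (K : 'M[R]_(\sum_(i < T) m, \sum_(j < T) n)) :
  Prop :=
  inD ub K /\ PT n T *m (Gu T A B *m ub + G0 T A *m mu0) - muf = 0.

End Defs.

Arguments inD {R m n} T ub K.
Arguments hK {R n m} T A B Sig0 W K.
Arguments J1conv {R n m} T A B Sig0 W K.
Arguments inD1 {R n m} T W rho ub K.
Arguments inD2 {R n m} T A B mu0 muf ub K.

Section ConvexProgram.
Variables (R : realType) (n m T : nat) (A : nat -> 'M[R]_n)
  (B : nat -> 'M[R]_(n, m)) (mu0 muf : 'cV[R]_n) (Sig0 W : 'M[R]_n) (rho : R).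

Definition conv_opt (ub : 'cV[R]_(\sum_(t < T) m))
  (K : 'M[R]_(\sum_(i < T) m, \sum_(j < T) n)) : Prop :=
  inD T ub K /\ inD1 T W rho ub K /\ inD2 T A B mu0 muf ub K /\
  forall ub' K', inD T ub' K' -> inD1 T W rho ub' K' ->
    inD2 T A B mu0 muf ub' K' ->
    J1conv T A B Sig0 W K <= J1conv T A B Sig0 W K'.
End ConvexProgram.

Arguments conv_opt {R n m} T A B mu0 muf Sig0 W rho ub K.

Section Stochastic.
Local Open Scope ring_scope.
Variables (d : measure_display) (Om : measurableType d) (R : realType)
  (P : probability Om R).

Definition L2vec n (X : Om -> 'cV[R]_n) : Prop :=
  forall i : 'I_n, (fun om => X om i ord0) \in Lfun P 2%:E.

Definition Emean n (X : Om -> 'cV[R]_n) : 'cV[R]_n :=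
  \col_i fine ('E_P[fun om => X om i ord0])%E.

Definition Covmx n (X : Om -> 'cV[R]_n) : 'M[R]_n :=
  \matrix_(i, j) fine (covariance P (fun om => X om i ord0) (fun om => X om j ord0)).

Definition Ecross n1 n2 (X : Om -> 'cV[R]_n1) (Y : Om -> 'cV[R]_n2) :
  'M[R]_(n1, n2) :=
  \matrix_(i, j) fine ('E_P[fun om => (X om i ord0 * Y om j ord0)%R])%E.

(* X ~ N(mu, Sig): square integrable, mean mu, covariance Sig, and
   characteristic function E[exp(i a^T X)] = exp(i a^T mu - a^T Sig a / 2)
   (written as its real and imaginary parts; this also covers degenerate Sig) *)
Definition gaussian n (X : Om -> 'cV[R]_n) (mu : 'cV[R]_n) (Sig : 'M[R]_n) :
  Prop :=
  [/\ L2vec X, Emean X = mu, Covmx X = Sig &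
   forall a : 'cV[R]_n,
     ('E_P[fun om => cos ((a^T *m X om) ord0 ord0)]
        = (cos ((a^T *m mu) ord0 ord0) * expR (- ((a^T *m Sig *m a) ord0 ord0) / 2))%:E)%E /\
     ('E_P[fun om => sin ((a^T *m X om) ord0 ord0)]
        = (sin ((a^T *m mu) ord0 ord0) * expR (- ((a^T *m Sig *m a) ord0 ord0) / 2))%:E)%E].

Definition u_proc m n (Ubar : nat -> 'cV[R]_m) (Kf : nat -> nat -> 'M[R]_(m, n))
  (w : nat -> Om -> 'cV[R]_n) (t : nat) (om : Om) : 'cV[R]_m :=
  Ubar t + \sum_(tau < t) Kf t.-1 tau *m w tau om.

Fixpoint x_proc n m (A : nat -> 'M[R]_n) (B : nat -> 'M[R]_(n, m))
  (x0 : Om -> 'cV[R]_n) (Ubar : nat -> 'cV[R]_m)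
  (Kf : nat -> nat -> 'M[R]_(m, n)) (w : nat -> Om -> 'cV[R]_n)
  (t : nat) (om : Om) : 'cV[R]_n :=
  match t with
  | 0 => x0 om
  | t'.+1 => A t' *m x_proc A B x0 Ubar Kf w t' om
             + B t' *m u_proc Ubar Kf w t' om + w t' om
  end.

Section Original.
Variables (n m T : nat) (A : nat -> 'M[R]_n) (B : nat -> 'M[R]_(n, m))
  (x0 : Om -> 'cV[R]_n) (w : nat -> Om -> 'cV[R]_n) (rho : R) (muf : 'cV[R]_n).

Definition J1stoch (Ubar : nat -> 'cV[R]_m) (Kf : nat -> nat -> 'M[R]_(m, n)) : R :=
  \tr (Covmx (x_proc A B x0 Ubar Kf w T)).

Definition orig_feasible (Ubar : nat -> 'cV[R]_m)
  (Kf : nat -> nat -> 'M[R]_(m, n)) : Prop :=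
  ('E_P[fun om => (\sum_(t < T) ((u_proc Ubar Kf w t om)^T *m u_proc Ubar Kf w t om) ord0 ord0)%R]
     - (rho ^+ 2)%:E <= 0)%E /\
  Emean (x_proc A B x0 Ubar Kf w T) = muf.

Definition orig_opt (Ubar : nat -> 'cV[R]_m) (Kf : nat -> nat -> 'M[R]_(m, n)) :
  Prop :=
  orig_feasible Ubar Kf /\
  forall Ubar' Kf', orig_feasible Ubar' Kf' -> J1stoch Ubar Kf <= J1stoch Ubar' Kf'.
End Original.
End Stochastic.

From HB Require Import structures.
From mathcomp Require Import all_boot all_order all_algebra.
From mathcomp Require Import all_classical all_reals all_analysis.
From mathcomp Require Import ring lra.
Import Order.TTheory GRing.Theory Num.Theory.

Set Implicit Arguments.
Unset Strict Implicit.
Unset Printing Implicit Defensive.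
Local Open Scope ring_scope.

(* Unrolling the recursion, x(T) = c + Phi(T,0) (x0 - mu0) + sum_j L_j w(j), where
   c depends only on ubar and mu0 and the gains L_j are affine in the feedback
   matrix, and u(t) = ubar(t) + sum_j K_(t,j) w(j).  As x0 - mu0 and the w(j) are
   centred and pairwise uncorrelated, such an affine combination has its constant
   part as mean and the sum of the congruences M_i Cov(Z_i) M_i^T as covariance;
   in the block notation of the paper these are the objective and constraint
   functions of the convex program.  Every structured pair (ubar, calK) comes
   from a policy, so optima correspond.  Convexity follows from
     q(l X + (1-l) Y) = l q(X) + (1-l) q(Y) - l (1-l) q(X - Y)
   for q(X) = tr(X Q X^T) with Q positive semidefinite. *)

Section LfunClosure.
Variables (d : measure_display) (Om : measurableType d) (R : realType)
  (P : probability Om R) (r : R).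
Hypothesis r_ge1 : 1 <= r.

Lemma Lfun_add (f g : Om -> R) : f \in Lfun P r%:E -> g \in Lfun P r%:E ->
  (fun x => f x + g x) \in Lfun P r%:E.
Proof.
have r_ge1E : (1 <= r%:E)%E by rewrite lee_fin.
move=> hf hg; have [_ /(_ 1 f g hf hg)] := Lfun_submod_closed P r_ge1E.
by rewrite scale1r.
Qed.

Lemma Lfun_mull (k : R) (f : Om -> R) : f \in Lfun P r%:E ->
  (fun x => k * f x) \in Lfun P r%:E.
Proof. by move/(Lfun_scale k r_ge1); under eq_fun do rewrite mulrC. Qed.

Lemma Lfun_sum (I : Type) (s : seq I) (F : I -> Om -> R) :
  (forall i, F i \in Lfun P r%:E) -> (fun x => \sum_(i <- s) F i x) \in Lfun P r%:E.
Proof.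
move=> hF; elim: s => [|i s IHs].
  by under eq_fun do rewrite big_nil; exact: Lfun_cst.
by under eq_fun do rewrite big_cons; exact: Lfun_add.
Qed.
End LfunClosure.

Section FiniteExpectation.
Variables (d : measure_display) (Om : measurableType d) (R : realType)
  (P : probability Om R).

Definition Efin (f : Om -> R) : R := fine ('E_P[f])%E.

Lemma Lfun2_Lfun1 (f : Om -> R) : f \in Lfun P 2%:E -> f \in Lfun P 1.
Proof. by apply: Lfun_subset12; exact: fin_num_measure. Qed.

Lemma expectation_Efin (f : Om -> R) : f \in Lfun P 1 -> ('E_P[f] = (Efin f)%:E)%E.
Proof. by move=> hf; rewrite /Efin fineK // expectation_fin_num. Qed.

Lemma EfinD (f g : Om -> R) : f \in Lfun P 1 -> g \in Lfun P 1 ->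
  Efin (fun x => f x + g x) = Efin f + Efin g.
Proof.
by move=> hf hg; rewrite /Efin (expectationD hf hg) fineD // expectation_fin_num.
Qed.

Lemma EfinZl (k : R) (f : Om -> R) : f \in Lfun P 1 ->
  Efin (fun x => k * f x) = k * Efin f.
Proof.
move=> hf; have -> : (fun x => k * f x) = k \o* f.
  by apply/funext => x /=; rewrite mulrC.
by rewrite /Efin expectationZl // fineM // expectation_fin_num.
Qed.

Lemma Efin_cst (c : R) : Efin (fun _ => c) = c.
Proof. by rewrite /Efin expectation_cst. Qed.

Lemma Efin_sum (I : Type) (s : seq I) (F : I -> Om -> R) :
  (forall i, F i \in Lfun P 1) ->
  Efin (fun x => \sum_(i <- s) F i x) = \sum_(i <- s) Efin (F i).
Proof.
move=> hF; elim: s => [|i s IHs].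
  by under eq_fun do rewrite big_nil; rewrite big_nil Efin_cst.
under eq_fun do rewrite big_cons.
by rewrite EfinD ?IHs ?big_cons //; exact: (Lfun_sum (lexx 1)).
Qed.
End FiniteExpectation.

Section VectorMoments.
Variables (d : measure_display) (Om : measurableType d) (R : realType)
  (P : probability Om R).
Implicit Types (p q : nat).

Let two_ge1 : (1 : R) <= 2. Proof. by rewrite ler1n. Qed.

Lemma L2vecD p (X Y : Om -> 'cV[R]_p) : L2vec P X -> L2vec P Y ->
  L2vec P (fun om => X om + Y om).
Proof.
move=> hX hY i; under eq_fun do rewrite mxE.
exact (Lfun_add two_ge1 (hX i) (hY i)).
Qed.

Lemma L2vec_mull p q (M : 'M[R]_(q, p)) (X : Om -> 'cV[R]_p) : L2vec P X ->
  L2vec P (fun om => M *m X om).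
Proof.
move=> hX i; under eq_fun do rewrite mxE.
apply: (Lfun_sum two_ge1) => k; exact: (Lfun_mull two_ge1 _ (hX k)).
Qed.

Lemma L2vec_cst p (c : 'cV[R]_p) : L2vec P (fun _ => c).
Proof. by move=> i; exact: Lfun_cst. Qed.

Lemma L2vec_sum p (I : Type) (s : seq I) (F : I -> Om -> 'cV[R]_p) :
  (forall i, L2vec P (F i)) -> L2vec P (fun x => \sum_(i <- s) F i x).
Proof.
move=> hF j; under eq_fun do rewrite summxE.
by apply: (Lfun_sum two_ge1) => i; exact: hF i j.
Qed.

Lemma L2vec_entry_Lfun1 p (X : Om -> 'cV[R]_p) i :
  L2vec P X -> (fun om => X om i ord0) \in Lfun P 1.
Proof. by move=> hX; exact: Lfun2_Lfun1. Qed.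

Lemma L2vec_prod_Lfun1 p q (X : Om -> 'cV[R]_p) (Y : Om -> 'cV[R]_q) i j :
  L2vec P X -> L2vec P Y -> (fun om => X om i ord0 * Y om j ord0) \in Lfun P 1.
Proof. by move=> hX hY; exact: Lfun2_mul_Lfun1. Qed.

Lemma EmeanE p (X : Om -> 'cV[R]_p) i j :
  Emean P X i j = Efin P (fun om => X om i ord0).
Proof. by rewrite mxE. Qed.

Lemma EcrossE p q (X : Om -> 'cV[R]_p) (Y : Om -> 'cV[R]_q) i j :
  Ecross P X Y i j = Efin P (fun om => X om i ord0 * Y om j ord0).
Proof. by rewrite mxE. Qed.

Lemma EmeanD p (X Y : Om -> 'cV[R]_p) : L2vec P X -> L2vec P Y ->
  Emean P (fun om => X om + Y om) = Emean P X + Emean P Y.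
Proof.
move=> hX hY; apply/matrixP => i j; rewrite [RHS]mxE !EmeanE -EfinD;
  try exact: L2vec_entry_Lfun1.
by under eq_fun do rewrite mxE.
Qed.

Lemma Emean_mull p q (M : 'M[R]_(q, p)) (X : Om -> 'cV[R]_p) : L2vec P X ->
  Emean P (fun om => M *m X om) = M *m Emean P X.
Proof.
move=> hX; apply/matrixP => i j; rewrite EmeanE mxE.
under eq_fun do rewrite mxE.
rewrite Efin_sum => [|k]; last exact/(Lfun_mull (lexx 1))/L2vec_entry_Lfun1.
by apply: eq_bigr => k _; rewrite EfinZl ?EmeanE //; exact: L2vec_entry_Lfun1.
Qed.

Lemma Emean_cst p (c : 'cV[R]_p) : Emean P (fun _ => c) = c.
Proof. by apply/matrixP => i j; rewrite EmeanE Efin_cst (ord1 j). Qed.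

Lemma Emean_sum p (I : Type) (s : seq I) (F : I -> Om -> 'cV[R]_p) :
  (forall i, L2vec P (F i)) ->
  Emean P (fun x => \sum_(i <- s) F i x) = \sum_(i <- s) Emean P (F i).
Proof.
move=> hF; apply/matrixP => i j; rewrite EmeanE summxE.
under eq_fun do rewrite summxE.
rewrite Efin_sum => [|k]; last exact: L2vec_entry_Lfun1.
by apply: eq_bigr => k _; rewrite EmeanE.
Qed.

Lemma EcrossC p q (X : Om -> 'cV[R]_p) (Y : Om -> 'cV[R]_q) :
  Ecross P Y X = (Ecross P X Y)^T.
Proof.
apply/matrixP => i j; rewrite [RHS]mxE !EcrossE.
by under eq_fun do rewrite mulrC.
Qed.

Lemma EcrossDl p q (X Y : Om -> 'cV[R]_p) (Z : Om -> 'cV[R]_q) :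
  L2vec P X -> L2vec P Y -> L2vec P Z ->
  Ecross P (fun om => X om + Y om) Z = Ecross P X Z + Ecross P Y Z.
Proof.
move=> hX hY hZ; apply/matrixP => i j; rewrite [RHS]mxE !EcrossE -EfinD;
  try exact: L2vec_prod_Lfun1.
by under eq_fun do rewrite mxE mulrDl.
Qed.

Lemma EcrossDr p q (X : Om -> 'cV[R]_p) (Y Z : Om -> 'cV[R]_q) :
  L2vec P X -> L2vec P Y -> L2vec P Z ->
  Ecross P X (fun om => Y om + Z om) = Ecross P X Y + Ecross P X Z.
Proof.
move=> hX hY hZ; apply/matrixP => i j; rewrite [RHS]mxE !EcrossE -EfinD;
  try exact: L2vec_prod_Lfun1.
by under eq_fun do rewrite mxE mulrDr.
Qed.

Lemma Ecross_mull p q r (M : 'M[R]_(r, p)) (X : Om -> 'cV[R]_p)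
  (Y : Om -> 'cV[R]_q) : L2vec P X -> L2vec P Y ->
  Ecross P (fun om => M *m X om) Y = M *m Ecross P X Y.
Proof.
move=> hX hY; apply/matrixP => i j; rewrite EcrossE mxE.
under eq_fun do rewrite mxE mulr_suml.
rewrite Efin_sum => [|k /=]; last first.
  under eq_fun do rewrite -mulrA; exact/(Lfun_mull (lexx 1))/L2vec_prod_Lfun1.
apply: eq_bigr => k _; rewrite EcrossE -EfinZl; last exact: L2vec_prod_Lfun1.
by under eq_fun do rewrite -mulrA.
Qed.

Lemma Ecross_mulr p q r (M : 'M[R]_(r, q)) (X : Om -> 'cV[R]_p)
  (Y : Om -> 'cV[R]_q) : L2vec P X -> L2vec P Y ->
  Ecross P X (fun om => M *m Y om) = Ecross P X Y *m M^T.
Proof. by move=> hX hY; rewrite EcrossC Ecross_mull // trmx_mul -EcrossC. Qed.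

Lemma Ecross_cstl p q (c : 'cV[R]_p) (Y : Om -> 'cV[R]_q) : L2vec P Y ->
  Ecross P (fun _ => c) Y = c *m (Emean P Y)^T.
Proof.
move=> hY; apply/matrixP => i j; rewrite EcrossE mxE big_ord1 !mxE.
by rewrite EfinZl //; exact: L2vec_entry_Lfun1.
Qed.

Lemma Ecross_cstr p q (X : Om -> 'cV[R]_p) (c : 'cV[R]_q) : L2vec P X ->
  Ecross P X (fun _ => c) = Emean P X *m c^T.
Proof. by move=> hX; rewrite EcrossC Ecross_cstl // trmx_mul trmxK. Qed.

Lemma Ecross_suml p q (I : Type) (s : seq I) (F : I -> Om -> 'cV[R]_p)
  (Y : Om -> 'cV[R]_q) : (forall i, L2vec P (F i)) -> L2vec P Y ->
  Ecross P (fun x => \sum_(i <- s) F i x) Y = \sum_(i <- s) Ecross P (F i) Y.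
Proof.
move=> hF hY; apply/matrixP => i j; rewrite EcrossE summxE.
under eq_fun do rewrite summxE mulr_suml.
rewrite Efin_sum => [|k]; last exact: L2vec_prod_Lfun1.
by apply: eq_bigr => k _; rewrite EcrossE.
Qed.

Lemma Ecross_sumr p q (I : Type) (s : seq I) (X : Om -> 'cV[R]_p)
  (F : I -> Om -> 'cV[R]_q) : L2vec P X -> (forall i, L2vec P (F i)) ->
  Ecross P X (fun x => \sum_(i <- s) F i x) = \sum_(i <- s) Ecross P X (F i).
Proof.
move=> hX hF; rewrite EcrossC Ecross_suml // raddf_sum /=.
by apply: eq_bigr => i _; rewrite -EcrossC.
Qed.

Lemma CovmxE p (X : Om -> 'cV[R]_p) : L2vec P X ->
  Covmx P X = Ecross P X X - Emean P X *m (Emean P X)^T.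
Proof.
move=> hX; apply/matrixP => i j.
rewrite !mxE big_ord1 !mxE covarianceE; last 3 first.
- exact: L2vec_entry_Lfun1.
- exact: L2vec_entry_Lfun1.
- exact: (L2vec_prod_Lfun1 i j hX hX).
rewrite (expectation_Efin (L2vec_prod_Lfun1 i j hX hX)).
rewrite (expectation_Efin (L2vec_entry_Lfun1 i hX)).
by rewrite (expectation_Efin (L2vec_entry_Lfun1 j hX)) -EFinM -EFinB.
Qed.

Lemma moments_affine_uncorrelated (I : finType) p q (c : 'cV[R]_p)
  (M : I -> 'M[R]_(p, q)) (Z : I -> Om -> 'cV[R]_q) :
  (forall i, L2vec P (Z i)) -> (forall i, Emean P (Z i) = 0) ->
  (forall i j, i != j -> Ecross P (Z i) (Z j) = 0) ->
  let Y := fun om => c + \sum_i M i *m Z i om in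
  [/\ L2vec P Y, Emean P Y = c &
      Ecross P Y Y = c *m c^T + \sum_i M i *m Ecross P (Z i) (Z i) *m (M i)^T].
Proof.
move=> hZ hEZ hCZ Y.
have hMZ i : L2vec P (fun om => M i *m Z i om) by exact: L2vec_mull.
have hS : L2vec P (fun om => \sum_i M i *m Z i om) by exact: L2vec_sum.
have hc : L2vec P (fun _ => c) by exact: L2vec_cst.
have ES : Emean P (fun om => \sum_i M i *m Z i om) = 0.
  by rewrite Emean_sum //; apply: big1 => i _; rewrite Emean_mull // hEZ mulmx0.
have hY : L2vec P Y by exact: L2vecD.
have EY : Emean P Y = c by rewrite EmeanD // Emean_cst ES addr0.
split => //; rewrite EcrossDl ?Ecross_cstl ?EY //.
rewrite EcrossDr ?Ecross_cstr ?ES ?mul0mx ?add0r //; congr (_ + _).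
rewrite Ecross_suml //; apply: eq_bigr => i _.
rewrite Ecross_mull // Ecross_sumr // (bigD1 i) //= big1 ?addr0.
  by rewrite Ecross_mulr // mulmxA.
by move=> j ji; rewrite Ecross_mulr // hCZ ?mul0mx // eq_sym.
Qed.

Lemma Ecross_centred p (X : Om -> 'cV[R]_p) : L2vec P X ->
  Ecross P (fun om => X om - Emean P X) (fun om => X om - Emean P X) = Covmx P X.
Proof.
move=> hX; have hc : L2vec P (fun _ => - Emean P X) by exact: L2vec_cst.
rewrite EcrossDl ?EcrossDr ?Ecross_cstl ?Ecross_cstr ?Emean_cst ?CovmxE //;
  try exact: L2vecD.
by rewrite !raddfN /= subrr addr0.
Qed.

Lemma expectation_sum_sqnorm (I : finType) p (X : I -> Om -> 'cV[R]_p) :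
  (forall i, L2vec P (X i)) ->
  ('E_P[fun om => (\sum_i ((X i om)^T *m X i om) ord0 ord0)%R]
   = (\sum_i \tr (Ecross P (X i) (X i)))%:E)%E.
Proof.
move=> hX.
have hsq i k : (fun om => X i om k ord0 * X i om k ord0) \in Lfun P 1.
  exact: L2vec_prod_Lfun1.
have sqnormE (v : 'cV[R]_p) : (v^T *m v) ord0 ord0 = \sum_k v k ord0 * v k ord0.
  by rewrite mxE; apply: eq_bigr => k _; rewrite mxE.
under eq_fun do under eq_bigr do rewrite sqnormE.
rewrite expectation_Efin; last first.
  by apply: (Lfun_sum (lexx 1)) => i; exact: (Lfun_sum (lexx 1)).
rewrite Efin_sum => [|i]; last exact: (Lfun_sum (lexx 1)).
congr _%:E; apply: eq_bigr => i _; rewrite Efin_sum //.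
by apply: eq_bigr => k _; rewrite EcrossE.
Qed.
End VectorMoments.

Section QuadraticForm.
Variable R : realType.

Definition psd N (Q : 'M[R]_N) : Prop :=
  forall v : 'cV[R]_N, 0 <= (v^T *m Q *m v) ord0 ord0.

Definition qf p N (Q : 'M[R]_N) (X : 'M[R]_(p, N)) : R := \tr (X *m Q *m X^T).

Lemma qf_ge0 p N (Q : 'M[R]_N) (X : 'M[R]_(p, N)) : psd Q -> 0 <= qf Q X.
Proof.
move=> hQ; apply: sumr_ge0 => i _.
have -> : (X *m Q *m X^T) i i = ((row i X) *m Q *m (row i X)^T) ord0 ord0.
  by rewrite -row_mul !mxE; apply: eq_bigr => k _; rewrite !mxE.
by have := hQ (row i X)^T; rewrite trmxK.
Qed.

Lemma psd1 N : psd (1%:M : 'M[R]_N).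
Proof.
move=> v; rewrite mulmx1 mxE; apply: sumr_ge0 => i _.
by rewrite mxE -expr2 sqr_ge0.
Qed.

Lemma qf_convex_comb p N (Q : 'M[R]_N) (X Y : 'M[R]_(p, N)) (l : R) :
  qf Q (l *: X + (1 - l) *: Y)
  = l * qf Q X + (1 - l) * qf Q Y - l * (1 - l) * qf Q (X - Y).
Proof.
set a := qf Q X; set e := qf Q Y.
set b := \tr (X *m Q *m Y^T); set c := \tr (Y *m Q *m X^T).
have -> : qf Q (l *: X + (1 - l) *: Y)
          = l * (l * a + (1 - l) * c) + (1 - l) * (l * b + (1 - l) * e).
  by rewrite /qf !raddfD /= !linearZ /= !mulmxDl -!scalemxAl !raddfD /= !mxtraceZ.
have -> : qf Q (X - Y) = a - c - (b - e).
  by rewrite /qf !raddfB /= !mulmxBl !raddfB.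
ring.
Qed.

Lemma qf_convex p N (Q : 'M[R]_N) (X Y : 'M[R]_(p, N)) (l : R) :
  psd Q -> 0 <= l <= 1 ->
  qf Q (l *: X + (1 - l) *: Y) <= l * qf Q X + (1 - l) * qf Q Y.
Proof.
move=> hQ /andP[l_ge0 l_le1]; rewrite qf_convex_comb lerBlDr lerDl.
by rewrite !mulr_ge0 ?qf_ge0 ?subr_ge0.
Qed.

Lemma mxrow_Wbold T n p (W : 'M[R]_n) (X : 'I_T -> 'M[R]_(p, n)) :
  \mxrow_(j < T) X j *m Wbold T W *m (\mxrow_(j < T) X j)^T
  = \sum_(j < T) X j *m W *m (X j)^T.
Proof. by rewrite mul_mxrow_mxdiag tr_mxrow mul_mxrow_mxcol. Qed.

Lemma qf_Wbold T n p (W : 'M[R]_n) (X : 'M[R]_(p, \sum_(j < T) n)) :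
  qf (Wbold T W) X = \sum_(j < T) qf W (submxrow X j).
Proof. by rewrite /qf -{1 2}[X]submxrowK mxrow_Wbold raddf_sum. Qed.

Lemma psd_Wbold T n (W : 'M[R]_n) : psd W -> psd (Wbold T W).
Proof.
move=> hW v; rewrite -trace_mx11 -[v in _ *m v]trmxK -/(qf _ _) qf_Wbold.
by apply: sumr_ge0 => j _; exact: qf_ge0.
Qed.

Lemma mulmx_affine_convex_comb p q r s (X : 'M[R]_(p, q)) (Y : 'M[R]_(q, r))
  (Z : 'M[R]_(q, s)) (K1 K2 : 'M[R]_(r, s)) (l : R) :
  X *m (Z + Y *m (l *: K1 + (1 - l) *: K2))
  = l *: (X *m (Z + Y *m K1)) + (1 - l) *: (X *m (Z + Y *m K2)).
Proof.
rewrite !mulmxDr -!scalemxAr !scalerDr addrACA -scalerDl.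
by rewrite subrKC scale1r.
Qed.
End QuadraticForm.

Section BlockMatrices.
Variables (R : realType) (n m T : nat) (A : nat -> 'M[R]_n)
  (B : nat -> 'M[R]_(n, m)).

Definition Kblock (Kf : nat -> nat -> 'M[R]_(m, n)) (i j : nat) : 'M[R]_(m, n) :=
  if (j < i)%N then Kf i.-1 j else 0.

Definition noise_gain (Kf : nat -> nat -> 'M[R]_(m, n)) (j : nat) : 'M[R]_n :=
  Phi A T j.+1 + \sum_(i < T) Phi A T i.+1 *m B i *m Kblock Kf i j.

Lemma PhiS t j : (j <= t)%N -> Phi A t.+1 j = A t *m Phi A t j.
Proof. by move=> jt; rewrite /Phi subSn //= subnKC. Qed.

Lemma Phi_id t : Phi A t t = 1%:M.
Proof. by rewrite /Phi subnn. Qed.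

Lemma sum_select_ord_max p (F : 'I_T.+1 -> 'M[R]_(n, p)) :
  \sum_(i < T.+1) ((if i == ord_max then 1%:M else 0) : 'M[R]_n) *m F i
  = F ord_max.
Proof.
rewrite (bigD1 ord_max) //= eqxx mul1mx big1 ?addr0 //.
by move=> i /negbTE ->; rewrite mul0mx.
Qed.

Lemma PT_G0 : PT R n T *m G0 T A = Phi A T 0.
Proof. by rewrite mul_mxrow_mxcol sum_select_ord_max. Qed.

Lemma PT_Gw : PT R n T *m Gw T A = \mxrow_(j < T) Phi A T j.+1.
Proof.
rewrite mul_mxrow_mxblock; apply: eq_mxrow => j.
by rewrite (sum_select_ord_max (fun i => if (j.+1 <= i)%N then _ else 0)) ltn_ord.
Qed.

Lemma PT_Gu : PT R n T *m Gu T A B = \mxrow_(j < T) (Phi A T j.+1 *m B j).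
Proof.
rewrite mul_mxrow_mxblock; apply: eq_mxrow => j.
by rewrite (sum_select_ord_max (fun i => if (j.+1 <= i)%N then _ else 0)) ltn_ord.
Qed.

Lemma PT_Gw_GuK Kf :
  PT R n T *m (Gw T A + Gu T A B *m calK T Kf) = \mxrow_(j < T) noise_gain Kf j.
Proof.
by rewrite mulmxDr mulmxA PT_Gw PT_Gu mul_mxrow_mxblock -mxrowD.
Qed.

Lemma J1convE Sig0 W (K : 'M[R]_(\sum_(i < T) m, \sum_(j < T) n)) :
  J1conv T A B Sig0 W K = \tr (Phi A T 0 *m Sig0 *m (Phi A T 0)^T)
    + qf (Wbold T W) (PT R n T *m (Gw T A + Gu T A B *m K)).
Proof.
by rewrite /J1conv /hK /qf -PT_G0 mulmxDr mulmxDl mxtraceD !trmx_mul !mulmxA.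
Qed.

Lemma PT_Gu_vcat_G0 (Ubar : nat -> 'cV[R]_m) (mu0 : 'cV[R]_n) :
  PT R n T *m (Gu T A B *m vcat T Ubar + G0 T A *m mu0)
  = Phi A T 0 *m mu0 + \sum_(j < T) Phi A T j.+1 *m B j *m Ubar j.
Proof. by rewrite mulmxDr !mulmxA PT_G0 PT_Gu addrC mul_mxrow_mxcol. Qed.

Lemma vcatT_vcat (Ubar : nat -> 'cV[R]_m) :
  (vcat T Ubar)^T *m vcat T Ubar = \sum_(t < T) (Ubar t)^T *m Ubar t.
Proof. by rewrite tr_mxcol mul_mxrow_mxcol. Qed.

Lemma qf_calK Kf (W : 'M[R]_n) :
  qf (Wbold T W) (calK T Kf) = \sum_(t < T) \sum_(j < T) qf W (Kblock Kf t j).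
Proof.
rewrite /qf mul_mxblock_mxdiag tr_mxblock mul_mxblock mxtrace_mxblock.
by apply: eq_bigr => t _; rewrite raddf_sum.
Qed.

Lemma inD_calK (Ubar : nat -> 'cV[R]_m) (Kf : nat -> nat -> 'M[R]_(m, n)) :
  inD T (vcat T Ubar) (calK T Kf).
Proof. by move=> i j ij; rewrite mxblockK ltnNge ij. Qed.

Lemma inD_policy (ub : 'cV[R]_(\sum_(t < T) m))
  (K : 'M[R]_(\sum_(i < T) m, \sum_(j < T) n)) :
  inD T ub K -> exists Ubar Kf, ub = vcat T Ubar /\ K = calK T Kf.
Proof.
move=> hK.
pose Ubar t := if insub t is Some i then submxcol (p_ := fun=> m) ub i else 0.
pose Kf i j := if (insub i.+1, insub j) is (Some a, Some b)
  then submxblock (p_ := fun=> m) (q_ := fun=> n) K a b else 0.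
exists Ubar, Kf; split.
  by rewrite -[LHS]submxcolK; apply: eq_mxcol => i; rewrite /Ubar valK.
rewrite -[LHS]submxblockK; apply: eq_mxblock => i j; rewrite /Kblock.
case: ltnP => [ji|]; last exact: hK.
by rewrite /Kf prednK ?(leq_ltn_trans _ ji) // !valK.
Qed.

Lemma inD_convex_comb l ub1 ub2 (K1 K2 : 'M[R]_(\sum_(i < T) m, \sum_(j < T) n)) :
  inD T ub1 K1 -> inD T ub2 K2 ->
  inD T (l *: ub1 + (1 - l) *: ub2) (l *: K1 + (1 - l) *: K2).
Proof.
move=> h1 h2 i j ij.
have -> : submxblock (l *: K1 + (1 - l) *: K2) i j
          = l *: submxblock K1 i j + (1 - l) *: submxblock K2 i j.
  by apply/matrixP => a b; rewrite !mxE.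
by rewrite h1 // h2 // !scaler0 addr0.
Qed.
End BlockMatrices.

Section ClosedLoop.
Variables (d : measure_display) (Om : measurableType d) (R : realType)
  (n m T : nat) (A : nat -> 'M[R]_n) (B : nat -> 'M[R]_(n, m))
  (x0 : Om -> 'cV[R]_n) (w : nat -> Om -> 'cV[R]_n)
  (Ubar : nat -> 'cV[R]_m) (Kf : nat -> nat -> 'M[R]_(m, n)) (mu0 : 'cV[R]_n).

Lemma x_procE t om : x_proc A B x0 Ubar Kf w t om =
  Phi A t 0 *m x0 om
  + \sum_(j < t) Phi A t j.+1 *m (B j *m u_proc Ubar Kf w j om + w j om).
Proof.
elim: t => [|t IHt]; first by rewrite /= Phi_id mul1mx big_ord0 addr0.
rewrite /= IHt big_ord_recr /= Phi_id mul1mx PhiS // mulmxDr mulmx_sumr mulmxA.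
rewrite -!addrA; congr (_ + (_ + _)).
by apply: eq_bigr => j _; rewrite PhiS ?mulmxA.
Qed.

Lemma u_procE t om : (t <= T)%N ->
  u_proc Ubar Kf w t om = Ubar t + \sum_(j < T) Kblock Kf t j *m w j om.
Proof.
move=> tT; congr (_ + _).
rewrite (big_ord_widen T (fun j => Kf t.-1 j *m w j om) tT) big_mkcond /=.
by apply: eq_bigr => j _; rewrite /Kblock; case: ifP; rewrite ?mul0mx.
Qed.

Definition state_noise (i : 'I_T.+1) : Om -> 'cV[R]_n :=
  if unlift ord0 i is Some j then w j else fun om => x0 om - mu0.

Definition state_gain (i : 'I_T.+1) : 'M[R]_n :=
  if unlift ord0 i is Some j then noise_gain T A B Kf j else Phi A T 0.

Definition state_mean : 'cV[R]_n :=
  Phi A T 0 *m mu0 + \sum_(j < T) Phi A T j.+1 *m B j *m Ubar j.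

Lemma state_noise0 : state_noise ord0 = (fun om => x0 om - mu0).
Proof. by rewrite /state_noise unlift_none. Qed.

Lemma state_noiseS (j : 'I_T) : state_noise (lift ord0 j) = w j.
Proof. by rewrite /state_noise liftK. Qed.

Lemma state_gain0 : state_gain ord0 = Phi A T 0.
Proof. by rewrite /state_gain unlift_none. Qed.

Lemma state_gainS (j : 'I_T) : state_gain (lift ord0 j) = noise_gain T A B Kf j.
Proof. by rewrite /state_gain liftK. Qed.

Lemma x_proc_T_affine om : x_proc A B x0 Ubar Kf w T om =
  state_mean + \sum_i state_gain i *m state_noise i om.
Proof.
have input_split :
    \sum_(j < T) Phi A T j.+1 *m (B j *m u_proc Ubar Kf w j om + w j om)
    = \sum_(j < T) Phi A T j.+1 *m B j *m Ubar j
      + \sum_(j < T) noise_gain T A B Kf j *m w j om.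
  under eq_bigr => j _ do rewrite u_procE 1?ltnW // !mulmxDr mulmx_sumr mulmxA.
  rewrite !big_split /= -addrA; congr (_ + _).
  under [RHS]eq_bigr => j _ do rewrite mulmxDl mulmx_suml.
  rewrite big_split /= addrC exchange_big /=; congr (_ + _).
  apply: eq_bigr => i _; rewrite mulmx_sumr.
  by apply: eq_bigr => j _; rewrite !mulmxA.
rewrite big_ord_recl state_gain0 state_noise0.
under eq_bigr => j _ do rewrite state_gainS state_noiseS.
by rewrite x_procE input_split mulmxBr addrACA subrKC.
Qed.
End ClosedLoop.

Section Policy.
Variables (d : measure_display) (Om : measurableType d) (R : realType)
  (P : probability Om R) (n m T : nat)
  (A : nat -> 'M[R]_n) (B : nat -> 'M[R]_(n, m))
  (mu0 : 'cV[R]_n) (Sig0 W : 'M[R]_n)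
  (x0 : Om -> 'cV[R]_n) (w : nat -> Om -> 'cV[R]_n).
Hypotheses (hx0 : gaussian P x0 mu0 Sig0)
  (hw : forall t, (t < T)%N -> gaussian P (w t) 0 W)
  (hwunc : forall t s, (t < T)%N -> (s < T)%N -> t <> s ->
     Ecross P (w t) (w s) = 0)
  (hx0w : forall t, (t < T)%N -> Ecross P x0 (w t) = 0).

Lemma L2vec_w t : (t < T)%N -> L2vec P (w t).
Proof. by move=> tT; case: (hw tT). Qed.

Lemma Emean_w t : (t < T)%N -> Emean P (w t) = 0.
Proof. by move=> tT; case: (hw tT). Qed.

Lemma Ecross_w t : (t < T)%N -> Ecross P (w t) (w t) = W.
Proof.
by move=> tT; case: (hw tT) => hL hE <- _; rewrite CovmxE // hE mul0mx subr0.
Qed.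

Lemma L2vec_state_noise (i : 'I_T.+1) : L2vec P (state_noise x0 w mu0 i).
Proof.
case: (unliftP ord0 i) => [j ->|->]; first by rewrite state_noiseS; exact: L2vec_w.
by rewrite state_noise0; apply: L2vecD; [case: hx0 | exact: L2vec_cst].
Qed.

Lemma Emean_state_noise (i : 'I_T.+1) : Emean P (state_noise x0 w mu0 i) = 0.
Proof.
case: (unliftP ord0 i) => [j ->|->]; first by rewrite state_noiseS; exact: Emean_w.
have [hL hE _ _] := hx0.
by rewrite state_noise0 EmeanD ?Emean_cst ?hE ?subrr //; exact: L2vec_cst.
Qed.

Lemma Ecross_centred_x0_w t : (t < T)%N ->
  Ecross P (fun om => x0 om - mu0) (w t) = 0.
Proof.
move=> tT; have [hL _ _ _] := hx0.
have hc : L2vec P (fun _ => - mu0) by exact: L2vec_cst.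
have hwt := L2vec_w tT.
by rewrite EcrossDl // hx0w // Ecross_cstl // Emean_w // trmx0 mulmx0 addr0.
Qed.

Lemma state_noise_uncorrelated (i j : 'I_T.+1) : i != j ->
  Ecross P (state_noise x0 w mu0 i) (state_noise x0 w mu0 j) = 0.
Proof.
case: (unliftP ord0 i) => [a ->|->]; case: (unliftP ord0 j) => [b ->|->];
  rewrite ?state_noiseS ?state_noise0 ?eqxx // => ij.
- by apply: hwunc => // /val_inj ab; move: ij; rewrite ab eqxx.
- by rewrite EcrossC Ecross_centred_x0_w ?trmx0.
- exact: Ecross_centred_x0_w.
Qed.

Lemma Ecross_centred_x0 :
  Ecross P (fun om => x0 om - mu0) (fun om => x0 om - mu0) = Sig0.
Proof. by have [hL <- <- _] := hx0; exact: Ecross_centred. Qed.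

Section FixedPolicy.
Variables (Ubar : nat -> 'cV[R]_m) (Kf : nat -> nat -> 'M[R]_(m, n)).

Lemma x_proc_T_moments :
  Emean P (x_proc A B x0 Ubar Kf w T) = state_mean T A B Ubar mu0 /\
  Covmx P (x_proc A B x0 Ubar Kf w T) = Phi A T 0 *m Sig0 *m (Phi A T 0)^T
    + \sum_(j < T) noise_gain T A B Kf j *m W *m (noise_gain T A B Kf j)^T.
Proof.
have -> : x_proc A B x0 Ubar Kf w T = fun om => state_mean T A B Ubar mu0
    + \sum_(i < T.+1) state_gain A B Kf i *m state_noise x0 w mu0 i om.
  by apply/funext => om; exact: x_proc_T_affine.
have [hL EY CY] := moments_affine_uncorrelated (state_mean T A B Ubar mu0)
  (state_gain A B Kf) L2vec_state_noise Emean_state_noise state_noise_uncorrelated.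
split => //; rewrite CovmxE // CY EY addrC addKr.
rewrite big_ord_recl state_gain0 state_noise0 Ecross_centred_x0; congr (_ + _).
apply: eq_bigr => j _.
by rewrite state_gainS state_noiseS Ecross_w.
Qed.

Lemma u_proc_moments t : (t < T)%N ->
  L2vec P (u_proc Ubar Kf w t) /\
  Ecross P (u_proc Ubar Kf w t) (u_proc Ubar Kf w t)
    = Ubar t *m (Ubar t)^T + \sum_(j < T) Kblock Kf t j *m W *m (Kblock Kf t j)^T.
Proof.
move=> tT; have -> : u_proc Ubar Kf w t = fun om => Ubar t
    + \sum_(j < T) Kblock Kf t j *m w j om.
  by apply/funext => om; rewrite (u_procE (T := T)) // ltnW.
have hL (j : 'I_T) : L2vec P (w j) by exact: L2vec_w.
have hE (j : 'I_T) : Emean P (w j) = 0 by exact: Emean_w.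
have hC (i j : 'I_T) : i != j -> Ecross P (w i) (w j) = 0.
  by move=> ij; apply: hwunc => // /val_inj /eqP; rewrite (negbTE ij).
have [hU _ CU] := moments_affine_uncorrelated (Ubar t)
  (fun j : 'I_T => Kblock Kf t j) hL hE hC.
split=> //; rewrite CU; congr (_ + _).
by apply: eq_bigr => j _; rewrite Ecross_w.
Qed.

Lemma J1stoch_J1conv :
  J1stoch P T A B x0 w Ubar Kf = J1conv T A B Sig0 W (calK T Kf).
Proof.
rewrite /J1stoch; have [_ ->] := x_proc_T_moments.
by rewrite J1convE PT_Gw_GuK /qf mxrow_Wbold mxtraceD.
Qed.

Lemma final_mean_constraint (muf : 'cV[R]_n) :
  Emean P (x_proc A B x0 Ubar Kf w T) = muf
  <-> inD2 T A B mu0 muf (vcat T Ubar) (calK T Kf).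
Proof.
have [-> _] := x_proc_T_moments; rewrite /inD2 PT_Gu_vcat_G0.
split=> [<-|[_ /eqP]]; last by rewrite subr_eq0 => /eqP.
by split; [exact: inD_calK | exact: subrr].
Qed.

Lemma input_energy_constraint (rho : R) :
  (('E_P[fun om => (\sum_(t < T) ((u_proc Ubar Kf w t om)^T
                                  *m u_proc Ubar Kf w t om) ord0 ord0)%R]
     - (rho ^+ 2)%:E <= 0)%E)
  <-> inD1 T W rho (vcat T Ubar) (calK T Kf).
Proof.
rewrite (expectation_sum_sqnorm (X := fun t : 'I_T => u_proc Ubar Kf w t)) =>
  [|t]; last by case: (u_proc_moments (ltn_ord t)).
rewrite -EFinB lee_fin /inD1 vcatT_vcat -/(qf (Wbold T W) (calK T Kf)) qf_calK.
rewrite summxE -big_split /=.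
under eq_bigr => t _ do rewrite (proj2 (u_proc_moments (ltn_ord t))) mxtraceD
  mxtrace_mulC trace_mx11 raddf_sum.
by split=> [h|[]//]; split=> //; exact: inD_calK.
Qed.
End FixedPolicy.

Lemma orig_opt_iff_conv_opt (rho : R) (muf : 'cV[R]_n)
  (Ubar : nat -> 'cV[R]_m) (Kf : nat -> nat -> 'M[R]_(m, n)) :
  orig_opt P T A B x0 w rho muf Ubar Kf
  <-> conv_opt T A B mu0 muf Sig0 W rho (vcat T Ubar) (calK T Kf).
Proof.
have feasible_iff U K : orig_feasible P T A B x0 w rho muf U K <->
    inD1 T W rho (vcat T U) (calK T K) /\ inD2 T A B mu0 muf (vcat T U) (calK T K).
  split=> -[h1 h2]; split.
  - exact/(input_energy_constraint U K).
  - exact/(final_mean_constraint U K).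
  - exact/(input_energy_constraint U K).
  - exact/(final_mean_constraint U K).
split=> [[/feasible_iff[hu hm] opt] | [_ [hu [hm opt]]]].
  split; first exact: inD_calK.
  do 2!split => //.
  move=> _ _ /inD_policy[U [K [-> ->]]] hu' hm'.
  rewrite -(J1stoch_J1conv Ubar) -(J1stoch_J1conv U); apply: opt.
  exact/feasible_iff.
split; first exact/feasible_iff.
move=> U K /feasible_iff[hu' hm'].
by rewrite !J1stoch_J1conv; apply: opt; first exact: inD_calK.
Qed.
End Policy.

Section Convexity.
Variables (R : realType) (n m T : nat) (A : nat -> 'M[R]_n)
  (B : nat -> 'M[R]_(n, m)) (mu0 muf : 'cV[R]_n) (Sig0 W : 'M[R]_n) (rho : R).
Hypothesis W_psd : psd W.

Let Wbold_psd : psd (Wbold T W) := psd_Wbold W_psd.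

Lemma J1conv_convex l (K1 K2 : 'M[R]_(\sum_(i < T) m, \sum_(j < T) n)) :
  0 <= l <= 1 ->
  J1conv T A B Sig0 W (l *: K1 + (1 - l) *: K2)
  <= l * J1conv T A B Sig0 W K1 + (1 - l) * J1conv T A B Sig0 W K2.
Proof.
move=> hl; rewrite !J1convE mulmx_affine_convex_comb.
rewrite mulrDr [(1 - l) * _]mulrDr addrACA -mulrDl subrKC mul1r lerD2l.
exact: qf_convex _ _ Wbold_psd hl.
Qed.

Lemma inD1_convex l ub1 ub2 (K1 K2 : 'M[R]_(\sum_(i < T) m, \sum_(j < T) n)) :
  0 <= l <= 1 -> inD1 T W rho ub1 K1 -> inD1 T W rho ub2 K2 ->
  inD1 T W rho (l *: ub1 + (1 - l) *: ub2) (l *: K1 + (1 - l) *: K2).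
Proof.
move=> /[dup] hl /andP[l_ge0 l_le1] [hD1 g1] [hD2 g2].
split; first exact: inD_convex_comb.
have sqE (ub : 'cV[R]_(\sum_(t < T) m)) : (ub^T *m ub) ord0 ord0 = qf 1%:M ub^T.
  by rewrite /qf mulmx1 trmxK trace_mx11.
have trmx_comb : (l *: ub1 + (1 - l) *: ub2)^T = l *: ub1^T + (1 - l) *: ub2^T.
  by rewrite raddfD /= !linearZ.
move: g1 g2; rewrite !sqE trmx_comb -/(qf (Wbold T W) K1) -/(qf (Wbold T W) K2).
rewrite -/(qf (Wbold T W) (l *: K1 + (1 - l) *: K2)) => g1 g2.
have := qf_convex ub1^T ub2^T (@psd1 R _) hl.
have := qf_convex K1 K2 Wbold_psd hl.
have : 0 <= 1 - l by rewrite subr_ge0.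
nra.
Qed.

Lemma inD2_convex l ub1 ub2 (K1 K2 : 'M[R]_(\sum_(i < T) m, \sum_(j < T) n)) :
  inD2 T A B mu0 muf ub1 K1 -> inD2 T A B mu0 muf ub2 K2 ->
  inD2 T A B mu0 muf (l *: ub1 + (1 - l) *: ub2) (l *: K1 + (1 - l) *: K2).
Proof.
move=> [hD1 e1] [hD2 e2]; split; first exact: inD_convex_comb.
move: e1 e2; rewrite ![Gu T A B *m _ + _]addrC mulmx_affine_convex_comb.
move=> /subr0_eq -> /subr0_eq ->.
by rewrite -scalerDl subrKC scale1r subrr.
Qed.
End Convexity.

Theorem theorem1
  (R : realType) (d : measure_display) (Om : measurableType d)
  (P : probability Om R) (n m T : nat)
  (A : nat -> 'M[R]_n) (B : nat -> 'M[R]_(n, m))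
  (mu0 : 'cV[R]_n) (Sig0 W : 'M[R]_n)
  (x0 : Om -> 'cV[R]_n) (w : nat -> Om -> 'cV[R]_n)
  (rho : R) (muf : 'cV[R]_n)
  (* Sigma_0 symmetric positive definite *)
  (hSig0sym : Sig0^T = Sig0)
  (hSig0pd : forall v : 'cV[R]_n, v != 0 -> 0 < (v^T *m Sig0 *m v) ord0 ord0)
  (* W symmetric positive semidefinite *)
  (hWsym : W^T = W)
  (hWpsd : forall v : 'cV[R]_n, 0 <= (v^T *m W *m v) ord0 ord0)
  (* x(0) ~ N(mu0, Sigma0) *)
  (hx0 : gaussian P x0 mu0 Sig0)
  (* w(0), ..., w(T-1) identically distributed N(0, W) *)
  (hw : forall t, (t < T)%N -> gaussian P (w t) 0 W)
  (* uncorrelated across time *)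
  (hwunc : forall t s, (t < T)%N -> (s < T)%N -> t <> s ->
     Ecross P (w t) (w s) = 0)
  (* E[x0 w(t)^T] = 0 *)
  (hx0w : forall t, (t < T)%N -> Ecross P x0 (w t) = 0)
  (hrho : 0 < rho) :
  (* 1. every policy (Ubar, K) corresponds to (vcat Ubar, calK K) in scrD, with
        the same objective and the same feasibility *)
  (forall (Ubar : nat -> 'cV[R]_m) (Kf : nat -> nat -> 'M[R]_(m, n)),
     [/\ inD T (vcat T Ubar) (calK T Kf),
         J1stoch P T A B x0 w Ubar Kf = J1conv T A B Sig0 W (calK T Kf),
         ((('E_P[fun om => (\sum_(t < T) ((u_proc Ubar Kf w t om)^T
                                          *m u_proc Ubar Kf w t om) ord0 ord0)%R]
             - (rho ^+ 2)%:E <= 0)%E)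
          <-> inD1 T W rho (vcat T Ubar) (calK T Kf)) &
         (Emean P (x_proc A B x0 Ubar Kf w T) = muf
          <-> inD2 T A B mu0 muf (vcat T Ubar) (calK T Kf))]) /\
  (* 2. every element of scrD arises from some policy *)
  (forall (ub : 'cV[R]_(\sum_(t < T) m))
          (K : 'M[R]_(\sum_(i < T) m, \sum_(j < T) n)),
     inD T ub K -> exists Ubar Kf, ub = vcat T Ubar /\ K = calK T Kf) /\
  (* 3. hence the optimal solutions correspond *)
  (forall (Ubar : nat -> 'cV[R]_m) (Kf : nat -> nat -> 'M[R]_(m, n)),
     orig_opt P T A B x0 w rho muf Ubar Kf
     <-> conv_opt T A B mu0 muf Sig0 W rho (vcat T Ubar) (calK T Kf)) /\
  (* 4. the program is convex: scrD, scrD_1, scrD_2 convex, calJ_1 convex on scrD *)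
  (forall (l : R) (ub1 ub2 : 'cV[R]_(\sum_(t < T) m))
          (K1 K2 : 'M[R]_(\sum_(i < T) m, \sum_(j < T) n)),
     0 <= l <= 1 ->
     let ub := l *: ub1 + (1 - l) *: ub2 in
     let K := l *: K1 + (1 - l) *: K2 in
     [/\ inD T ub1 K1 -> inD T ub2 K2 -> inD T ub K,
         inD T ub1 K1 -> inD T ub2 K2 ->
           J1conv T A B Sig0 W K
             <= l * J1conv T A B Sig0 W K1 + (1 - l) * J1conv T A B Sig0 W K2,
         inD1 T W rho ub1 K1 -> inD1 T W rho ub2 K2 -> inD1 T W rho ub K &
         inD2 T A B mu0 muf ub1 K1 -> inD2 T A B mu0 muf ub2 K2 ->
           inD2 T A B mu0 muf ub K]).
Proof.
split; [|split; [|split]].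
- move=> Ubar Kf; split; first exact: inD_calK.
  + exact: J1stoch_J1conv hx0 hw hwunc hx0w Ubar Kf.
  + exact: input_energy_constraint hw hwunc Ubar Kf rho.
  + exact: final_mean_constraint hx0 hw hwunc hx0w Ubar Kf muf.
- exact: inD_policy.
- by move=> Ubar Kf; exact: orig_opt_iff_conv_opt.
- move=> l ub1 ub2 K1 K2 hl /=; split.
  + exact: inD_convex_comb.
  + by move=> _ _; exact: J1conv_convex.
  + exact: inD1_convex.
  + exact: inD2_convex.
Qed.
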